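(* Let $\varphi:(-1,1)\to\mathbb{R}^n$ be a $C^3$ curve with $\varphi'\neq0$. (i) If $S_1\varphi(x)\le \pi^2/2$ for all $x\in(-1,1)$, then for all $x_1,x_2\in(-1,1)$, $$\frac{|\varphi(x_1)-\varphi(x_2)|}{\{|\varphi'(x_1)||\varphi'(x_2)|\}^{1/2}}\ge \frac{2}{\pi}\sin\Big(\frac{\pi}{2}|x_1-x_2|\Big).$$ (ii) If $S_1\varphi(x)\le 2(1-x^2)^{-2}$ for all $x\in(-1,1)$, then for all $x_1,x_2\in(-1,1)$, $$\frac{|\varphi(x_1)-\varphi(x_2)|}{\{|\varphi'(x_1)||\varphi'(x_2)|\}^{1/2}}\ge \sqrt{(1-x_1^2)(1-x_2^2)}\;d(x_1,x_2),$$ where $d(x_1,x_2)=\big|\tfrac12\log\tfrac{1+x_1}{1-x_1}-\tfrac12\log\tfrac{1+x_2}{1-x_2}\big|$.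
   Context: For a $C^3$ curve $\varphi$ into $\mathbb{R}^n$ with $\varphi'\neq0$, the Ahlfors Schwarzian is $S_1\varphi=\frac{\langle\varphi',\varphi'''\rangle}{|\varphi'|^2}-3\frac{\langle\varphi',\varphi''\rangle^2}{|\varphi'|^4}+\frac32\frac{|\varphi''|^2}{|\varphi'|^2}$, with Euclidean inner product and norm. *)

From Stdlib Require Import Reals.
Open Scope R_scope.

(* Vectors of R^n are represented as functions nat -> R, only the
   coordinates 0..n-1 being relevant. *)
Fixpoint sumR (n : nat) (f : nat -> R) : R :=
  match n with
  | O => 0
  | S m => sumR m f + f m
  end.

Definition dotn (n : nat) (u v : nat -> R) : R := sumR n (fun i => u i * v i).
Definition normn (n : nat) (u : nat -> R) : R := sqrt (dotn n u u).
Definition subv (u v : nat -> R) : nat -> R := fun i => u i - v i.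

Definition C3_curve (n : nat) (phi d1 d2 d3 : R -> nat -> R) : Prop :=
  forall x, -1 < x < 1 -> forall i, (i < n)%nat ->
    derivable_pt_lim (fun t => phi t i) x (d1 x i) /\
    derivable_pt_lim (fun t => d1 t i) x (d2 x i) /\
    derivable_pt_lim (fun t => d2 t i) x (d3 x i) /\
    continuity_pt (fun t => d3 t i) x.

Definition S1 (n : nat) (d1 d2 d3 : R -> nat -> R) (x : R) : R :=
  dotn n (d1 x) (d3 x) / (normn n (d1 x))^2
  - 3 * (dotn n (d1 x) (d2 x))^2 / (normn n (d1 x))^4
  + 3/2 * (normn n (d2 x))^2 / (normn n (d1 x))^2.

Definition dhyp (x1 x2 : R) : R :=
  Rabs (1/2 * ln ((1 + x1) / (1 - x1)) - 1/2 * ln ((1 + x2) / (1 - x2))).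

(* Fix [a] and let [w = phi - phi a].  Where [w <> 0], the function
   [y = |w| |phi'|^(-1/2)] satisfies [y'' + (S_1 phi / 2) y >= 0]: writing
   [y' = y L], the quantity [L' + L^2 + S_1 phi / 2] is a positive multiple of
   the squared norm of a combination of [w], [phi'] and [phi''].  Sturm
   comparison with the solution [u] of [u'' + (P/2) u = 0], [u a = 0],
   [u' a = 1], where [P] bounds [S_1 phi], then gives [y >= |phi'(a)|^(1/2) u]
   up to the first zero of [w], so [w] never vanishes on [(a, 1)] and the
   bound holds there.  For [P = pi^2/2] and [P = 2 (1 - x^2)^(-2)] the
   solutions are [(2/pi) sin (pi/2 (x - a))] and
   [sqrt ((1 - a^2) (1 - x^2)) d(a, x)]. *)

From Stdlib Require Import Reals Lra Lia Psatz Classical.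
Open Scope R_scope.

Notation dpl := derivable_pt_lim.

(* The Stdlib rules are stated for [plus_fct], [mult_fct], ...; these
   pointwise forms can be applied directly. *)
Lemma dpl_eq f x a b : dpl f x a -> a = b -> dpl f x b.
Proof. now intros H ->. Qed.
Lemma dpl_const c x : dpl (fun _ => c) x 0.
Proof. apply derivable_pt_lim_const. Qed.
Lemma dpl_id x : dpl (fun t => t) x 1.
Proof. apply derivable_pt_lim_id. Qed.
Lemma dpl_plus f g x a b : dpl f x a -> dpl g x b -> dpl (fun t => f t + g t) x (a + b).
Proof. intros; now apply (derivable_pt_lim_plus f g). Qed.
Lemma dpl_minus f g x a b : dpl f x a -> dpl g x b -> dpl (fun t => f t - g t) x (a - b).
Proof. intros; now apply (derivable_pt_lim_minus f g). Qed.
Lemma dpl_mult f g x a b :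
  dpl f x a -> dpl g x b -> dpl (fun t => f t * g t) x (a * g x + f x * b).
Proof. intros; now apply (derivable_pt_lim_mult f g). Qed.
Lemma dpl_div f g x a b : dpl f x a -> dpl g x b -> g x <> 0 ->
  dpl (fun t => f t / g t) x ((a * g x - b * f x) / (g x * g x)).
Proof. intros; now apply (derivable_pt_lim_div f g). Qed.
Lemma dpl_comp f h x a b : dpl f x a -> dpl h (f x) b -> dpl (fun t => h (f t)) x (b * a).
Proof. intros; now apply (derivable_pt_lim_comp f h). Qed.
Lemma dpl_scal c f x a : dpl f x a -> dpl (fun t => c * f t) x (c * a).
Proof.
  intros H. eapply dpl_eq; [apply (dpl_mult (fun _ => c) f); [apply dpl_const | exact H] | ring].
Qed.

Lemma dpl_continuity_pt f x a : dpl f x a -> continuity_pt f x.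
Proof. intro H. apply derivable_continuous_pt. now exists a. Qed.

Lemma continuity_pt_eps f x : continuity_pt f x -> forall eps, 0 < eps ->
  exists del, 0 < del /\ forall y, Rabs (y - x) < del -> Rabs (f y - f x) < eps.
Proof.
  intros H eps He. destruct (H eps He) as [d [Hd H']]. exists d; split; auto.
  intros y Hy. destruct (Req_dec y x) as [->|Hne].
  - rewrite Rminus_diag, Rabs_R0; lra.
  - apply (H' y). repeat split; auto.
Qed.

Lemma continuity_pt_plus' f g x :
  continuity_pt f x -> continuity_pt g x -> continuity_pt (fun t => f t + g t) x.
Proof. intros; now apply (continuity_pt_plus f g). Qed.
Lemma continuity_pt_minus' f g x :
  continuity_pt f x -> continuity_pt g x -> continuity_pt (fun t => f t - g t) x.
Proof. intros; now apply (continuity_pt_minus f g). Qed.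
Lemma continuity_pt_mult' f g x :
  continuity_pt f x -> continuity_pt g x -> continuity_pt (fun t => f t * g t) x.
Proof. intros; now apply (continuity_pt_mult f g). Qed.
Lemma continuity_pt_comp' f h x :
  continuity_pt f x -> continuity_pt h (f x) -> continuity_pt (fun t => h (f t)) x.
Proof. intros; now apply (continuity_pt_comp f h). Qed.
Lemma continuity_pt_const' c x : continuity_pt (fun _ => c) x.
Proof. now apply continuity_pt_const. Qed.
Lemma continuity_pt_abs f x : continuity_pt f x -> continuity_pt (fun t => Rabs (f t)) x.
Proof. intros; apply continuity_pt_comp'; auto. apply Rcontinuity_abs. Qed.

(** * Real functions of one variable *)

Lemma discriminant_nonpos A B C :
  0 <= A -> (forall t, 0 <= A * t ^ 2 + 2 * B * t + C) -> B ^ 2 <= A * C.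
Proof.
  intros [HA|<-] H.
  - assert (HB := H (- B / A)).
    replace (A * (- B / A) ^ 2 + 2 * B * (- B / A) + C) with ((A * C - B ^ 2) / A) in HB
      by (field; lra).
    apply Rmult_le_reg_r with (/ A); [now apply Rinv_0_lt_compat|].
    unfold Rdiv in HB; nra.
  - destruct (Req_dec B 0) as [->|HB]; [lra|].
    specialize (H (- (C + 1) / (2 * B))).
    replace (0 * (- (C + 1) / (2 * B)) ^ 2 + 2 * B * (- (C + 1) / (2 * B)) + C) with (-1)
      in H by (field; lra).
    lra.
Qed.

Lemma nondecreasing_of_derive_nonneg f f' a b :
  (forall t, a < t < b -> dpl f t (f' t)) -> (forall t, a < t < b -> 0 <= f' t) ->
  forall t1 t2, a < t1 -> t1 <= t2 -> t2 < b -> f t1 <= f t2.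
Proof.
  intros Hd Hp t1 t2 H1 H2 H3. destruct (Req_dec t1 t2) as [->|Hne]; [lra|].
  destruct (MVT_cor2 f f' t1 t2) as [c [Hc1 Hc2]]; [lra | intros c Hc; apply Hd; lra |].
  assert (0 <= f' c) by (apply Hp; lra). nra.
Qed.

Lemma derive_pos_right f a l : dpl f a l -> 0 < l ->
  exists del, 0 < del /\ forall t, a < t < a + del -> f a < f t.
Proof.
  intros Hf Hl. destruct (Hf (l / 2) ltac:(lra)) as [[del Hdel] Hd]; simpl in Hd.
  exists del; split; auto. intros t Ht.
  specialize (Hd (t - a) ltac:(lra) ltac:(rewrite Rabs_right; lra)).
  replace (a + (t - a)) with t in Hd by ring.
  apply Rabs_def2 in Hd.
  assert (l / 2 < (f t - f a) / (t - a)) by lra.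
  apply Rmult_lt_reg_r with (/ (t - a)); [apply Rinv_0_lt_compat; lra|].
  unfold Rdiv in H; lra.
Qed.

Lemma nonneg_of_nondecreasing f a b :
  (forall t1 t2, a < t1 -> t1 <= t2 -> t2 < b -> f t1 <= f t2) ->
  (forall eps, 0 < eps -> exists del, 0 < del /\ forall t, a < t < a + del -> - eps < f t) ->
  forall t, a < t < b -> 0 <= f t.
Proof.
  intros Hm Hlim t Ht. destruct (Rle_lt_dec 0 (f t)) as [|Hn]; auto.
  destruct (Hlim (- f t / 2) ltac:(lra)) as [del [Hdel Hd]].
  set (s := Rmin (a + del / 2) ((a + t) / 2)).
  assert (a < s < a + del /\ s <= t) by (unfold s, Rmin; destruct Rle_dec; lra).
  assert (- (- f t / 2) < f s) by (apply Hd; lra).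
  assert (f s <= f t) by (apply Hm; lra). lra.
Qed.

Lemma ge_of_nondecreasing f a b C :
  (forall t1 t2, a < t1 -> t1 <= t2 -> t2 < b -> f t1 <= f t2) ->
  (forall eps c, 0 < eps -> a < c -> exists s, a < s < c /\ C - eps <= f s) ->
  forall t, a < t < b -> C <= f t.
Proof.
  intros Hm Hlim t Ht. destruct (Rle_lt_dec C (f t)) as [|Hn]; auto.
  destruct (Hlim ((C - f t) / 2) t ltac:(lra) ltac:(lra)) as [s [Hs Hfs]].
  assert (f s <= f t) by (apply Hm; lra). lra.
Qed.

Lemma continuity_pt_le_left f a t0 :
  a < t0 -> continuity_pt f t0 -> (forall t, a < t < t0 -> 0 <= f t) -> 0 <= f t0.
Proof.
  intros Ha Hc Hf. destruct (Rle_lt_dec 0 (f t0)) as [|Hn]; auto.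
  destruct (continuity_pt_eps f t0 Hc (- f t0) ltac:(lra)) as [del [Hdel Hd]].
  set (t := Rmax (t0 - del / 2) ((a + t0) / 2)).
  assert (a < t < t0 /\ t0 - t < del) by (unfold t, Rmax; destruct Rle_dec; lra).
  specialize (Hd t ltac:(rewrite Rabs_left; lra)). apply Rabs_def2 in Hd.
  assert (0 <= f t) by (apply Hf; lra). lra.
Qed.

Lemma first_zero f a b x del :
  0 < del -> (forall t, a < t < a + del -> f t <> 0) ->
  (forall t, a < t < b -> continuity_pt f t) -> a < x < b -> f x = 0 ->
  exists t0, a < t0 < b /\ f t0 = 0 /\ forall t, a < t < t0 -> f t <> 0.
Proof.
  intros Hdel Hnear Hc Hx Hfx.
  (* the infimum of the zeros is the supremum of their opposites *)
  set (Z := fun s => a < - s < b /\ f (- s) = 0).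
  assert (HZb : bound Z) by (exists (- a); intros s Hs; unfold Z in Hs; lra).
  assert (HZx : Z (- x)) by (unfold Z; rewrite Ropp_involutive; tauto).
  destruct (completeness Z HZb (ex_intro _ _ HZx)) as [m [Hub Hlub]].
  assert (Hbelow : forall s, a < s < b -> f s = 0 -> - m <= s).
  { intros s Hs Hfs. assert (Z (- s)) by (unfold Z; rewrite Ropp_involutive; tauto).
    specialize (Hub _ H); lra. }
  assert (Happrox : forall eps, 0 < eps -> exists s, a < s < b /\ f s = 0 /\ s < - m + eps).
  { intros eps Heps. apply NNPP; intros Hn. enough (m <= m - eps) by lra.
    apply Hlub; unfold is_upper_bound, Z; intros s [Hs Hfs]. apply Rnot_lt_le; intros Hlt.
    apply Hn; exists (- s); repeat split; lra. }
  assert (Hx0 : - m <= x) by (apply Hbelow; auto).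
  assert (Hda : a + del <= - m).
  { apply Rnot_lt_le; intros Hlt.
    destruct (Happrox (a + del - - m) ltac:(lra)) as [s [Hs [Hfs Hsm]]].
    apply (Hnear s); auto. assert (- m <= s) by (apply Hbelow; auto). lra. }
  exists (- m). split; [lra|]. split.
  - apply NNPP; intros Hne.
    destruct (continuity_pt_eps f (- m) (Hc (- m) ltac:(lra)) (Rabs (f (- m))))
      as [eta [Heta Hd]]; [now apply Rabs_pos_lt|].
    destruct (Happrox eta Heta) as [s [Hs [Hfs Hsm]]].
    assert (- m <= s) by (apply Hbelow; auto).
    specialize (Hd s ltac:(rewrite Rabs_right; lra)).
    rewrite Hfs, Rminus_0_l, Rabs_Ropp in Hd. lra.
  - intros t Ht Hft. assert (- m <= t) by (apply Hbelow; auto; lra). lra.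
Qed.

(* [W = y (u L - u') = u y' - y u'] is the Wronskian of [u] and [y];
   [W' = y u (L' + L^2 + P/2)], so [W] and then [y / u] increase. *)
Lemma sturm_comparison (a b C : R) (y L L' u du ddu P : R -> R) :
  (forall t, a < t < b -> dpl y t (y t * L t)) ->
  (forall t, a < t < b -> dpl L t (L' t)) ->
  (forall t, a < t < b -> 0 <= L' t + L t ^ 2 + P t / 2) ->
  (forall t, a < t < b -> 0 <= y t) ->
  (forall t, a < t < b -> dpl u t (du t) /\ dpl du t (ddu t)) ->
  (forall t, a < t < b -> ddu t = - (P t / 2) * u t) ->
  (forall t, a < t < b -> 0 < u t) ->
  (forall eps, 0 < eps -> exists del, 0 < del /\
     forall t, a < t < a + del -> - eps < y t * (u t * L t - du t)) ->
  (forall eps c, 0 < eps -> a < c -> exists s, a < s < c /\ (C - eps) * u s <= y s) ->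
  forall t, a < t < b -> C * u t <= y t.
Proof.
  intros Hy HL HQ Hy0 Hu Hddu Hu0 HW0 Hstart.
  set (W := fun t => y t * (u t * L t - du t)).
  assert (HWm : forall t1 t2, a < t1 -> t1 <= t2 -> t2 < b -> W t1 <= W t2).
  { apply (nondecreasing_of_derive_nonneg W (fun t => y t * u t * (L' t + L t ^ 2 + P t / 2))).
    - intros t Ht. destruct (Hu t Ht) as [Hu1 Hu2]. unfold W. eapply dpl_eq.
      + apply dpl_mult; [now apply Hy|].
        apply dpl_minus; [apply dpl_mult; [exact Hu1 | now apply HL] | exact Hu2].
      + rewrite Hddu; auto. ring.
    - intros t Ht. apply Rmult_le_pos; [apply Rmult_le_pos|]; auto.
      now apply Rlt_le, Hu0. }
  assert (HW : forall t, a < t < b -> 0 <= W t) by (apply nonneg_of_nondecreasing; auto).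
  assert (Hratio : forall t1 t2, a < t1 -> t1 <= t2 -> t2 < b -> y t1 / u t1 <= y t2 / u t2).
  { apply (nondecreasing_of_derive_nonneg _ (fun t => W t / (u t * u t))).
    - intros t Ht. destruct (Hu t Ht) as [Hu1 _]. assert (Hut := Hu0 t Ht).
      eapply dpl_eq; [apply dpl_div; [now apply Hy | exact Hu1 | lra]|].
      unfold W; field; lra.
    - intros t Ht. assert (Hut := Hu0 t Ht).
      apply Rmult_le_pos; [now apply HW | apply Rlt_le, Rinv_0_lt_compat; nra]. }
  intros t Ht. assert (Hut := Hu0 t Ht).
  enough (C <= y t / u t) by (apply Rmult_le_reg_r with (/ u t);
    [now apply Rinv_0_lt_compat | unfold Rdiv in H; rewrite Rmult_assoc, Rinv_r; lra]).
  apply (ge_of_nondecreasing (fun t => y t / u t) a b); auto.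
  intros eps c Heps Hc. destruct (Hstart eps (Rmin c ((a + b) / 2)) Heps) as [s [Hs Hys]].
  { apply Rmin_glb_lt; lra. }
  assert (Hsb : s < c /\ s < b) by (split; apply Rlt_le_trans with (1 := proj2 Hs);
    [apply Rmin_l | apply Rle_trans with (1 := Rmin_r _ _); lra]).
  exists s; split; [lra|]. assert (Hus := Hu0 s ltac:(lra)).
  apply Rmult_le_reg_r with (u s); auto. unfold Rdiv; rewrite Rmult_assoc, Rinv_l; lra.
Qed.

(** * Comparison equations *)

Record comparison_solution (P : R -> R) (a : R) (u du ddu : R -> R) : Prop := {
  cs_derive : forall t, -1 < t < 1 -> dpl u t (du t) /\ dpl du t (ddu t);
  cs_ode : forall t, a < t < 1 -> ddu t = - (P t / 2) * u t;
  cs_start : u a = 0;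
  cs_slope : du a = 1;
  cs_pos : forall t, a < t < 1 -> 0 < u t }.

Lemma sine_comparison_solution a : -1 < a ->
  comparison_solution (fun _ => PI ^ 2 / 2) a
    (fun t => 2 / PI * sin (PI / 2 * (t - a)))
    (fun t => cos (PI / 2 * (t - a)))
    (fun t => - (PI / 2) * sin (PI / 2 * (t - a))).
Proof.
  intros Ha. pose proof PI_RGT_0.
  assert (Harg : forall t, dpl (fun t => PI / 2 * (t - a)) t (PI / 2 * (1 - 0))).
  { intro t. apply dpl_scal, dpl_minus; [apply dpl_id | apply dpl_const]. }
  split.
  - intros t _. split.
    + eapply dpl_eq; [apply dpl_scal, (dpl_comp _ sin), derivable_pt_lim_sin; apply Harg|].
      field; lra.
    + eapply dpl_eq; [apply (dpl_comp _ cos), derivable_pt_lim_cos; apply Harg|]. ring.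
  - intros t _. cbv beta. field; lra.
  - rewrite Rminus_diag, Rmult_0_r, sin_0; ring.
  - rewrite Rminus_diag, Rmult_0_r; apply cos_0.
  - intros t Ht. apply Rmult_lt_0_compat; [apply Rdiv_lt_0_compat; lra|].
    apply sin_gt_0; nra.
Qed.

Definition artanh t := 1 / 2 * ln ((1 + t) / (1 - t)).

Lemma artanh_derive t : -1 < t < 1 -> dpl artanh t (1 / (1 - t ^ 2)).
Proof.
  intros Ht. unfold artanh. eapply dpl_eq.
  - apply dpl_scal, (dpl_comp (fun t => (1 + t) / (1 - t)) ln).
    + apply dpl_div; [apply dpl_plus | apply dpl_minus | lra]; apply dpl_const || apply dpl_id.
    + apply derivable_pt_lim_ln, Rdiv_lt_0_compat; lra.
  - field. repeat split; nra.
Qed.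

Lemma artanh_increasing a t : -1 < a -> a < t -> t < 1 -> artanh a < artanh t.
Proof.
  intros. unfold artanh. apply Rmult_lt_compat_l; [lra|].
  apply ln_increasing; [apply Rdiv_lt_0_compat; lra|].
  apply Rmult_lt_reg_r with ((1 - a) * (1 - t)); [nra|]. field_simplify; lra.
Qed.

Lemma sqrt_one_minus_sq_derive t : -1 < t < 1 ->
  dpl (fun t => sqrt (1 - t ^ 2)) t (- t / sqrt (1 - t ^ 2)).
Proof.
  intros Ht. assert (Hp : 0 < 1 - t ^ 2) by nra.
  eapply dpl_eq.
  - apply (dpl_comp (fun t => 1 - t ^ 2) sqrt); [|now apply derivable_pt_lim_sqrt].
    apply dpl_minus; [apply dpl_const | apply derivable_pt_lim_pow].
  - cbv beta. simpl. field. apply Rgt_not_eq, sqrt_lt_R0; auto.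
Qed.

Lemma hyperbolic_comparison_solution a : -1 < a < 1 ->
  comparison_solution (fun t => 2 / (1 - t ^ 2) ^ 2) a
    (fun t => sqrt (1 - a ^ 2) * sqrt (1 - t ^ 2) * (artanh t - artanh a))
    (fun t => sqrt (1 - a ^ 2) * (1 - t * (artanh t - artanh a)) / sqrt (1 - t ^ 2))
    (fun t => - (2 / (1 - t ^ 2) ^ 2 / 2) *
              (sqrt (1 - a ^ 2) * sqrt (1 - t ^ 2) * (artanh t - artanh a))).
Proof.
  intros Ha. split.
  - intros t Ht. assert (Hp : 0 < 1 - t ^ 2) by nra.
    assert (Hs := sqrt_lt_R0 _ Hp). assert (Hss := sqrt_sqrt _ (Rlt_le _ _ Hp)).
    assert (Hart : dpl (fun t => artanh t - artanh a) t (1 / (1 - t ^ 2) - 0))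
      by (apply dpl_minus; [now apply artanh_derive | apply dpl_const]).
    split; eapply dpl_eq.
    + apply dpl_mult; [apply dpl_scal, sqrt_one_minus_sq_derive; auto | exact Hart].
    + cbv beta. set (s := sqrt (1 - t ^ 2)) in *. clearbody s. rewrite <- Hss. field. lra.
    + apply dpl_div; [| apply sqrt_one_minus_sq_derive; auto | lra].
      apply dpl_scal, dpl_minus; [apply dpl_const | apply dpl_mult; [apply dpl_id | exact Hart]].
    + cbv beta. set (s := sqrt (1 - t ^ 2)) in *. clearbody s.
      replace (1 - t ^ 2) with (s * s). field_simplify_eq; [|lra].
      replace (s ^ 2) with (1 - t ^ 2) by (rewrite <- Hss; ring). ring.
  - reflexivity.
  - cbv beta. ring.
  - cbv beta. rewrite Rminus_diag. assert (0 < sqrt (1 - a ^ 2)) by (apply sqrt_lt_R0; nra).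
    field; lra.
  - intros t Ht. pose proof (artanh_increasing a t ltac:(lra) ltac:(lra) ltac:(lra)).
    apply Rmult_lt_0_compat; [apply Rmult_lt_0_compat; apply sqrt_lt_R0; nra | lra].
Qed.

(** * Inner products on R^n *)

Lemma dotn_sym n f g : dotn n f g = dotn n g f.
Proof. unfold dotn. induction n; simpl; [ring | rewrite IHn; ring]. Qed.

Lemma dotn_nonneg n f : 0 <= dotn n f f.
Proof. unfold dotn. induction n; simpl; nra. Qed.

Lemma dotn_subv_diag n p f : dotn n (subv p p) f = 0.
Proof. unfold dotn, subv. induction n; simpl; [ring | rewrite IHn; ring]. Qed.

Lemma dotn_0r n f : dotn n f (fun _ => 0) = 0.
Proof. unfold dotn. induction n; simpl; [ring | rewrite IHn; ring]. Qed.

Lemma dotn_lincomb3 n c1 c2 c3 f g h :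
  dotn n (fun i => c1 * f i + c2 * g i + c3 * h i) (fun i => c1 * f i + c2 * g i + c3 * h i) =
  c1 ^ 2 * dotn n f f + c2 ^ 2 * dotn n g g + c3 ^ 2 * dotn n h h
  + 2 * c1 * c2 * dotn n f g + 2 * c1 * c3 * dotn n f h + 2 * c2 * c3 * dotn n g h.
Proof. unfold dotn. induction n; simpl; [ring | rewrite IHn; ring]. Qed.

Lemma dotn_cauchy_schwarz n f g : dotn n f g ^ 2 <= dotn n f f * dotn n g g.
Proof.
  apply discriminant_nonpos; [apply dotn_nonneg|]. intro t.
  pose proof (dotn_nonneg n (fun i => t * f i + 1 * g i + 0 * g i)) as H.
  rewrite dotn_lincomb3 in H. lra.
Qed.

Lemma abs_dotn_le n f g : Rabs (dotn n f g) <= sqrt (dotn n f f) * sqrt (dotn n g g).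
Proof.
  rewrite <- sqrt_mult by apply dotn_nonneg. rewrite <- sqrt_Rsqr_abs.
  apply sqrt_le_1_alt. unfold Rsqr. rewrite <- Rmult_1_r at 1.
  pose proof (dotn_cauchy_schwarz n f g). simpl in H. lra.
Qed.

Lemma dotn_derive n f g f' g' x :
  (forall i, (i < n)%nat -> dpl (fun t => f t i) x (f' i) /\ dpl (fun t => g t i) x (g' i)) ->
  dpl (fun t => dotn n (f t) (g t)) x (dotn n f' (g x) + dotn n (f x) g').
Proof.
  unfold dotn. induction n; intros H; simpl.
  - eapply dpl_eq; [apply dpl_const | ring].
  - destruct (H n) as [Hf Hg]; [lia|]. eapply dpl_eq.
    + apply dpl_plus; [apply IHn; intros i Hi; apply H; lia|].
      exact (dpl_mult (fun t => f t n) (fun t => g t n) _ _ _ Hf Hg).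
    + cbv beta; ring.
Qed.

Lemma normn_sq n f : normn n f ^ 2 = dotn n f f.
Proof. unfold normn. simpl. rewrite Rmult_1_r. apply sqrt_sqrt, dotn_nonneg. Qed.

Lemma normn_subv_sym n p q : normn n (subv p q) = normn n (subv q p).
Proof. unfold normn, dotn, subv. f_equal. induction n; simpl; [ring | rewrite IHn; ring]. Qed.

Lemma normn_subv_diag n p : normn n (subv p p) = 0.
Proof. unfold normn. rewrite dotn_subv_diag. apply sqrt_0. Qed.

(** * The normalized chord length of a curve *)

Section Chord.

Variables (n : nat) (phi d1 d2 d3 : R -> nat -> R).
Hypothesis curve : C3_curve n phi d1 d2 d3.
Hypothesis speed_pos : forall t, -1 < t < 1 -> 0 < dotn n (d1 t) (d1 t).

(* [K t = |phi'(t)|^(-1/2)] *)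
Definition K t := exp (- (1 / 4) * ln (dotn n (d1 t) (d1 t))).

Lemma K_pos t : 0 < K t.
Proof. apply exp_pos. Qed.

Lemma K_sqr_speed t : -1 < t < 1 -> K t * K t * sqrt (dotn n (d1 t) (d1 t)) = 1.
Proof.
  intros Ht. assert (He := speed_pos t Ht).
  assert (H4 : (K t * K t) ^ 2 * dotn n (d1 t) (d1 t) = 1).
  { unfold K. rewrite <- exp_plus. rewrite <- (exp_ln (dotn n (d1 t) (d1 t))) at 3 by lra.
    simpl. rewrite Rmult_1_r, <- !exp_plus. transitivity (exp 0); [f_equal; field | apply exp_0]. }
  assert (Hs := sqrt_lt_R0 _ He). assert (Hss := sqrt_sqrt _ (Rlt_le _ _ He)).
  assert (HK := K_pos t).
  assert (Hsq : (K t * K t * sqrt (dotn n (d1 t) (d1 t))) ^ 2 = 1)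
    by (rewrite <- H4; transitivity ((K t * K t) ^ 2 * (sqrt (dotn n (d1 t) (d1 t)) *
          sqrt (dotn n (d1 t) (d1 t)))); [ring | now rewrite Hss]).
  assert (0 < K t * K t * sqrt (dotn n (d1 t) (d1 t))) by (apply Rmult_lt_0_compat; nra).
  nra.
Qed.

Lemma speed_derive t : -1 < t < 1 ->
  dpl (fun s => dotn n (d1 s) (d1 s)) t (2 * dotn n (d1 t) (d2 t)).
Proof.
  intros Ht. eapply dpl_eq.
  - apply (dotn_derive n d1 d1 (d2 t) (d2 t)). intros i Hi.
    destruct (curve t Ht i Hi) as [_ [H2 _]]. now split.
  - rewrite (dotn_sym n (d2 t)). ring.
Qed.

Lemma d1_d2_derive t : -1 < t < 1 ->
  dpl (fun s => dotn n (d1 s) (d2 s)) t (dotn n (d2 t) (d2 t) + dotn n (d1 t) (d3 t)).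
Proof.
  intros Ht. apply (dotn_derive n d1 d2 (d2 t) (d3 t)). intros i Hi.
  destruct (curve t Ht i Hi) as [_ [H2 [H3 _]]]. now split.
Qed.

Lemma K_derive t : -1 < t < 1 ->
  dpl K t (K t * (- dotn n (d1 t) (d2 t) / (2 * dotn n (d1 t) (d1 t)))).
Proof.
  intros Ht. assert (He := speed_pos t Ht). unfold K. eapply dpl_eq.
  - apply (dpl_comp (fun t => - (1 / 4) * ln (dotn n (d1 t) (d1 t))) exp).
    + apply dpl_scal, (dpl_comp _ ln); [now apply speed_derive | now apply derivable_pt_lim_ln].
    + apply derivable_pt_lim_exp.
  - field. lra.
Qed.

Variable a : R.

Definition chord t := subv (phi t) (phi a).
Definition chord2 t := dotn n (chord t) (chord t).
Definition y t := sqrt (chord2 t) * K t.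
(* the logarithmic derivative of [y] *)
Definition L t :=
  dotn n (chord t) (d1 t) / chord2 t - dotn n (d1 t) (d2 t) / (2 * dotn n (d1 t) (d1 t)).
Definition L' t :=
  ((dotn n (d1 t) (d1 t) + dotn n (chord t) (d2 t)) * chord2 t
     - 2 * dotn n (chord t) (d1 t) ^ 2) / chord2 t ^ 2
  - ((dotn n (d2 t) (d2 t) + dotn n (d1 t) (d3 t)) * dotn n (d1 t) (d1 t)
     - 2 * dotn n (d1 t) (d2 t) ^ 2) / (2 * dotn n (d1 t) (d1 t) ^ 2).

Lemma chord_derive t i : -1 < t < 1 -> (i < n)%nat -> dpl (fun s => chord s i) t (d1 t i).
Proof.
  intros Ht Hi. destruct (curve t Ht i Hi) as [H1 _]. unfold chord, subv.
  eapply dpl_eq; [apply dpl_minus; [exact H1 | apply dpl_const] | ring].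
Qed.

Lemma chord2_derive t : -1 < t < 1 -> dpl chord2 t (2 * dotn n (chord t) (d1 t)).
Proof.
  intros Ht. eapply dpl_eq.
  - apply (dotn_derive n chord chord (d1 t) (d1 t)). intros i Hi. split; now apply chord_derive.
  - rewrite dotn_sym. ring.
Qed.

Lemma chord_d1_derive t : -1 < t < 1 ->
  dpl (fun s => dotn n (chord s) (d1 s)) t (dotn n (d1 t) (d1 t) + dotn n (chord t) (d2 t)).
Proof.
  intros Ht. apply (dotn_derive n chord d1 (d1 t) (d2 t)). intros i Hi.
  split; [now apply chord_derive|].
  now destruct (curve t Ht i Hi) as [_ [H2 _]].
Qed.

Lemma y_nonneg t : 0 <= y t.
Proof. apply Rmult_le_pos; [apply sqrt_pos | apply Rlt_le, K_pos]. Qed.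

Lemma y_continuity_pt t : -1 < t < 1 -> continuity_pt y t.
Proof.
  intros Ht. apply continuity_pt_mult'; [|eapply dpl_continuity_pt, K_derive; auto].
  apply (continuity_pt_comp' chord2 sqrt); [eapply dpl_continuity_pt, chord2_derive; auto|].
  apply continuity_pt_sqrt, dotn_nonneg.
Qed.

Lemma y_derive t : -1 < t < 1 -> 0 < chord2 t -> dpl y t (y t * L t).
Proof.
  intros Ht Hw. assert (He := speed_pos t Ht). unfold y, L. eapply dpl_eq.
  - apply dpl_mult; [|now apply K_derive].
    apply (dpl_comp chord2 sqrt); [now apply chord2_derive | now apply derivable_pt_lim_sqrt].
  - assert (Hs := sqrt_lt_R0 _ Hw). assert (Hss := sqrt_sqrt _ (Rlt_le _ _ Hw)).
    set (s := sqrt (chord2 t)) in *. clearbody s. rewrite <- Hss. field. lra.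
Qed.

Lemma L_derive t : -1 < t < 1 -> 0 < chord2 t -> dpl L t (L' t).
Proof.
  intros Ht Hw. assert (He := speed_pos t Ht). unfold L, L'. eapply dpl_eq.
  - apply dpl_minus; (apply dpl_div; [| |lra]).
    + now apply chord_d1_derive.
    + now apply chord2_derive.
    + now apply d1_d2_derive.
    + now apply dpl_scal, speed_derive.
  - cbv beta. field. lra.
Qed.

(* [(L' + L^2 + S_1/2) * 4 |w|^4 |phi'|^6] is the squared norm of
   [c1 w + c2 phi' + c3 phi''] for the coefficients below, [w] the chord. *)
Lemma riccati_nonneg t : -1 < t < 1 -> 0 < chord2 t ->
  0 <= L' t + L t ^ 2 + S1 n d1 d2 d3 t / 2.
Proof.
  intros Ht Hw. assert (He := speed_pos t Ht).
  unfold S1. rewrite !normn_sq.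
  replace (normn n (d1 t) ^ 4) with ((normn n (d1 t) ^ 2) ^ 2) by ring.
  rewrite normn_sq. unfold L', L.
  set (ww := chord2 t) in *. set (w1 := dotn n (chord t) (d1 t)).
  set (e11 := dotn n (d1 t) (d1 t)) in *. set (e12 := dotn n (d1 t) (d2 t)).
  set (c1 := 2 * e11 ^ 2). set (c2 := - 2 * e11 * w1 - ww * e12). set (c3 := ww * e11).
  pose proof (dotn_nonneg n (fun i => c1 * chord t i + c2 * d1 t i + c3 * d2 t i)) as G.
  rewrite dotn_lincomb3 in G.
  match goal with |- 0 <= ?r => replace r with
    ((c1 ^ 2 * ww + c2 ^ 2 * e11 + c3 ^ 2 * dotn n (d2 t) (d2 t) + 2 * c1 * c2 * w1
      + 2 * c1 * c3 * dotn n (chord t) (d2 t) + 2 * c2 * c3 * e12) / (4 * ww ^ 2 * e11 ^ 3)) end.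
  - apply Rmult_le_pos; [exact G|]. apply Rlt_le, Rinv_0_lt_compat.
    apply Rmult_lt_0_compat; [nra | now apply pow_lt].
  - unfold c1, c2, c3. field. lra.
Qed.

Hypothesis a_in : -1 < a < 1.

Lemma y_at_a : y a = 0.
Proof. unfold y, chord2, chord. rewrite dotn_subv_diag, sqrt_0. ring. Qed.

(* [<w(t), phi'(a)>] has derivative [|phi'(a)|^2 > 0] at [a]; it bounds
   [|w(t)| |phi'(a)|] from below. *)
Lemma chord_proj_derive :
  dpl (fun t => dotn n (chord t) (d1 a)) a (dotn n (d1 a) (d1 a)).
Proof.
  eapply dpl_eq.
  - apply (dotn_derive n chord (fun _ => d1 a) (d1 a) (fun _ => 0)). intros i Hi.
    split; [now apply chord_derive | apply dpl_const].
  - now rewrite dotn_0r, Rplus_0_r.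
Qed.

Lemma chord_proj_le t :
  dotn n (chord t) (d1 a) <= sqrt (chord2 t) * sqrt (dotn n (d1 a) (d1 a)).
Proof. eapply Rle_trans; [apply Rle_abs | apply abs_dotn_le]. Qed.

Lemma chord2_pos_near_a : exists del, 0 < del /\ forall t, a < t < a + del -> 0 < chord2 t.
Proof.
  destruct (derive_pos_right _ a _ chord_proj_derive (speed_pos a a_in)) as [del [Hdel Hd]].
  exists del; split; auto. intros t Ht. specialize (Hd t Ht). cbv beta in Hd.
  unfold chord at 1 in Hd. rewrite dotn_subv_diag in Hd.
  pose proof (chord_proj_le t). pose proof (sqrt_pos (dotn n (d1 a) (d1 a))).
  apply sqrt_lt_0_alt. rewrite sqrt_0. nra.
Qed.

Lemma abs_y_L_le t : -1 < t < 1 ->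
  Rabs (y t * L t) <=
  K t * sqrt (dotn n (d1 t) (d1 t))
  + y t * (Rabs (dotn n (d1 t) (d2 t)) / (2 * dotn n (d1 t) (d1 t))).
Proof.
  intros Ht. assert (He := speed_pos t Ht). assert (HK := K_pos t).
  assert (Hsplit : y t * L t = K t * (sqrt (chord2 t) * (dotn n (chord t) (d1 t) / chord2 t))
                               - y t * (dotn n (d1 t) (d2 t) / (2 * dotn n (d1 t) (d1 t))))
    by (unfold y, L; ring).
  rewrite Hsplit. eapply Rle_trans; [apply Rabs_triang|]. rewrite Rabs_Ropp.
  apply Rplus_le_compat.
  - rewrite Rabs_mult, (Rabs_right (K t)) by lra. apply Rmult_le_compat_l; [lra|].
    destruct (Rle_lt_dec (chord2 t) 0) as [Hw|Hw].
    + assert (chord2 t = 0) by (pose proof (dotn_nonneg n (chord t)); unfold chord2 in *; lra).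
      rewrite H, sqrt_0, Rmult_0_l, Rabs_R0. apply sqrt_pos.
    + assert (Hs := sqrt_lt_R0 _ Hw). assert (Hss := sqrt_sqrt _ (Rlt_le _ _ Hw)).
      rewrite <- Hss at 2. replace (sqrt (chord2 t) * (dotn n (chord t) (d1 t) /
        (sqrt (chord2 t) * sqrt (chord2 t)))) with (dotn n (chord t) (d1 t) / sqrt (chord2 t))
        by (field; lra).
      unfold Rdiv. rewrite Rabs_mult, Rabs_inv, (Rabs_right (sqrt _)) by lra.
      apply Rmult_le_reg_r with (sqrt (chord2 t)); [lra|].
      rewrite Rmult_assoc, Rinv_l, Rmult_1_r by lra.
      rewrite Rmult_comm. apply abs_dotn_le.
  - rewrite Rabs_mult, (Rabs_right (y t)) by (apply Rle_ge, y_nonneg).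
    apply Rmult_le_compat_l; [apply y_nonneg|].
    unfold Rdiv. rewrite Rabs_mult, Rabs_inv, (Rabs_right (2 * _)) by lra. lra.
Qed.

Lemma bracket_continuity_pt t : -1 < t < 1 ->
  continuity_pt (fun s => K s * sqrt (dotn n (d1 s) (d1 s))
    + y s * (Rabs (dotn n (d1 s) (d2 s)) / (2 * dotn n (d1 s) (d1 s)))) t.
Proof.
  intros Ht. assert (He := speed_pos t Ht).
  assert (Hspeed := dpl_continuity_pt _ _ _ (speed_derive t Ht)).
  apply continuity_pt_plus'; apply continuity_pt_mult'.
  - eapply dpl_continuity_pt, K_derive; auto.
  - apply (continuity_pt_comp' _ sqrt); [exact Hspeed | apply continuity_pt_sqrt; lra].
  - now apply y_continuity_pt.
  - apply (continuity_pt_div (fun s => Rabs (dotn n (d1 s) (d2 s)))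
      (fun s => 2 * dotn n (d1 s) (d1 s))); [| |lra].
    + apply continuity_pt_abs. eapply dpl_continuity_pt, d1_d2_derive; auto.
    + apply continuity_pt_mult'; [apply continuity_pt_const' | exact Hspeed].
Qed.

(* The Wronskian [y (u L - u')] tends to [0] at [a]: [|y L|] stays bounded. *)
Lemma wronskian_start (u du : R -> R) :
  continuity_pt u a -> continuity_pt du a -> u a = 0 ->
  forall eps, 0 < eps -> exists del, 0 < del /\
    forall t, a < t < a + del -> - eps < y t * (u t * L t - du t).
Proof.
  intros Hu Hdu Hua eps Heps.
  set (G := fun t => Rabs (u t) * (K t * sqrt (dotn n (d1 t) (d1 t))
    + y t * (Rabs (dotn n (d1 t) (d2 t)) / (2 * dotn n (d1 t) (d1 t)))) + y t * Rabs (du t)).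
  assert (HG : continuity_pt G a).
  { apply continuity_pt_plus'; apply continuity_pt_mult'.
    - now apply continuity_pt_abs.
    - now apply bracket_continuity_pt.
    - now apply y_continuity_pt.
    - now apply continuity_pt_abs. }
  assert (HGa : G a = 0) by (unfold G; rewrite Hua, y_at_a, Rabs_R0; ring).
  destruct (continuity_pt_eps G a HG eps Heps) as [del [Hdel Hd]].
  exists (Rmin del (1 - a)). split; [apply Rmin_glb_lt; lra|].
  intros t Ht. assert (Ht1 : t < 1 /\ t - a < del)
    by (split; [pose proof (Rmin_r del (1 - a)) | pose proof (Rmin_l del (1 - a))]; lra).
  specialize (Hd t ltac:(rewrite Rabs_right; lra)). rewrite HGa, Rminus_0_r in Hd.
  assert (HGt : G t < eps) by (pose proof (Rle_abs (G t)); lra).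
  enough (Rabs (y t * (u t * L t - du t)) <= G t)
    by (pose proof (Rle_abs (- (y t * (u t * L t - du t)))) as Hn; rewrite Rabs_Ropp in Hn; lra).
  replace (y t * (u t * L t - du t)) with (u t * (y t * L t) - y t * du t) by ring.
  eapply Rle_trans; [apply Rabs_triang|].
  rewrite Rabs_Ropp, (Rabs_mult (u t)), (Rabs_mult (y t) (du t)).
  rewrite (Rabs_right (y t)) by (apply Rle_ge, y_nonneg).
  unfold G. apply Rplus_le_compat_r, Rmult_le_compat_l; [apply Rabs_pos | apply abs_y_L_le; lra].
Qed.

(* Near [a], [y] is at least [|phi'(a)|^(1/2) u] up to [eps]; the witness
   comes from [<w, phi'(a)>] growing with slope [|phi'(a)|^2]. *)
Lemma y_start (u : R -> R) : dpl u a 1 -> u a = 0 ->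
  forall eps c, 0 < eps -> a < c -> exists s, a < s < c /\
    (K a * sqrt (dotn n (d1 a) (d1 a)) - eps) * u s <= y s.
Proof.
  intros Hu Hua eps c Heps Hc.
  assert (He := speed_pos a a_in). assert (Hs := sqrt_lt_R0 _ He).
  assert (Hss := sqrt_sqrt _ (Rlt_le _ _ He)).
  set (C := K a * sqrt (dotn n (d1 a) (d1 a))).
  set (F := fun t =>
    K t * dotn n (chord t) (d1 a) * / sqrt (dotn n (d1 a) (d1 a)) - (C - eps) * u t).
  assert (HF : dpl F a eps).
  { unfold F. eapply dpl_eq.
    - apply dpl_minus; [|apply dpl_scal, Hu].
      apply (dpl_mult (fun t => K t * dotn n (chord t) (d1 a))); [|apply dpl_const].
      apply dpl_mult; [apply K_derive; auto | apply chord_proj_derive].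
    - cbv beta. replace (dotn n (chord a) (d1 a)) with 0 by (symmetry; apply dotn_subv_diag).
      unfold C. set (e := dotn n (d1 a) (d1 a)) in *. set (r := sqrt e) in *. clearbody r.
      rewrite <- Hss. field. lra. }
  assert (HFa : F a = 0) by (unfold F, chord; rewrite dotn_subv_diag, Hua; ring).
  destruct (derive_pos_right F a eps HF Heps) as [del [Hdel Hd]].
  set (s := a + Rmin del (Rmin (c - a) (1 - a)) / 2).
  assert (Hm := Rmin_l del (Rmin (c - a) (1 - a))).
  assert (Hm' := Rmin_r del (Rmin (c - a) (1 - a))).
  assert (0 < Rmin del (Rmin (c - a) (1 - a))) by (repeat apply Rmin_glb_lt; lra).
  pose proof (Rmin_l (c - a) (1 - a)). pose proof (Rmin_r (c - a) (1 - a)).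
  exists s. split; [unfold s; lra|].
  specialize (Hd s ltac:(unfold s; lra)). rewrite HFa in Hd. unfold F in Hd.
  enough (K s * dotn n (chord s) (d1 a) * / sqrt (dotn n (d1 a) (d1 a)) <= y s) by lra.
  unfold y. rewrite (Rmult_comm (sqrt _)), Rmult_assoc.
  apply Rmult_le_compat_l; [apply Rlt_le, K_pos|].
  apply Rmult_le_reg_r with (sqrt (dotn n (d1 a) (d1 a))); [lra|].
  rewrite Rmult_assoc, Rinv_l, Rmult_1_r by lra. apply chord_proj_le.
Qed.

Lemma y_ge_solution (P u du ddu : R -> R) b :
  a < b -> b <= 1 -> comparison_solution P a u du ddu ->
  (forall t, a < t < 1 -> S1 n d1 d2 d3 t <= P t) ->
  (forall t, a < t < b -> 0 < chord2 t) ->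
  forall t, a < t < b -> K a * sqrt (dotn n (d1 a) (d1 a)) * u t <= y t.
Proof.
  intros Hab Hb [Hu Hode Hua Hdua Hupos] HP Hw.
  destruct (Hu a a_in) as [Hu1 Hdu1].
  apply (sturm_comparison a b _ y L L' u du ddu P).
  - intros t Ht. apply y_derive; [lra | auto].
  - intros t Ht. apply L_derive; [lra | auto].
  - intros t Ht. assert (HPt := HP t ltac:(lra)).
    pose proof (riccati_nonneg t ltac:(lra) (Hw t Ht)). lra.
  - intros t _. apply y_nonneg.
  - intros t Ht. apply Hu; lra.
  - intros t Ht. apply Hode; lra.
  - intros t Ht. apply Hupos; lra.
  - apply wronskian_start; auto; eapply dpl_continuity_pt; eauto.
  - apply y_start; auto. now rewrite <- Hdua.
Qed.

(* At the first zero [t0] of the chord, comparison would give [y t0 > 0]. *)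
Lemma chord2_pos (P u du ddu : R -> R) :
  comparison_solution P a u du ddu ->
  (forall t, a < t < 1 -> S1 n d1 d2 d3 t <= P t) ->
  forall t, a < t < 1 -> 0 < chord2 t.
Proof.
  intros Hsol HP x Hx. destruct (Rlt_le_dec 0 (chord2 x)) as [|Hx0]; auto. exfalso.
  assert (Hnn : forall t, 0 <= chord2 t) by (intro; apply dotn_nonneg).
  destruct chord2_pos_near_a as [del [Hdel Hnear]].
  destruct (first_zero chord2 a 1 x del) as [t0 [Ht0 [Hz Hbefore]]]; auto.
  - intros t Ht. specialize (Hnear t Ht). lra.
  - intros t Ht. eapply dpl_continuity_pt, chord2_derive; lra.
  - specialize (Hnn x). lra.
  - assert (Hcmp := y_ge_solution P u du ddu t0 ltac:(lra) ltac:(lra) Hsol HP).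
    assert (Hpos : forall t, a < t < t0 -> 0 < chord2 t)
      by (intros t Ht; specialize (Hbefore t Ht); specialize (Hnn t); lra).
    specialize (Hcmp Hpos).
    set (C := K a * sqrt (dotn n (d1 a) (d1 a))) in Hcmp.
    assert (HC : 0 < C)
      by (apply Rmult_lt_0_compat; [apply K_pos | apply sqrt_lt_R0, speed_pos; auto]).
    destruct Hsol as [Hu _ _ _ Hupos].
    assert (Hlim : 0 <= y t0 - C * u t0).
    { apply (continuity_pt_le_left (fun t => y t - C * u t) a); [lra| |].
      - apply continuity_pt_minus'; [apply y_continuity_pt; lra|].
        apply continuity_pt_mult'; [apply continuity_pt_const'|].
        eapply dpl_continuity_pt, Hu; lra.
      - intros t Ht. specialize (Hcmp t Ht). lra. }
    unfold y in Hlim. rewrite Hz, sqrt_0 in Hlim.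
    assert (0 < u t0) by (apply Hupos; lra). nra.
Qed.

Lemma sqrt_speed_mul_K t s : -1 < t < 1 -> -1 < s < 1 ->
  sqrt (normn n (d1 t) * normn n (d1 s)) * (K t * K s) = 1.
Proof.
  intros Ht Hs. unfold normn.
  assert (Hp := sqrt_pos (sqrt (dotn n (d1 t) (d1 t)) * sqrt (dotn n (d1 s) (d1 s)))).
  assert (Hsq := sqrt_sqrt (sqrt (dotn n (d1 t) (d1 t)) * sqrt (dotn n (d1 s) (d1 s)))
    ltac:(apply Rmult_le_pos; apply sqrt_pos)).
  assert (Ht1 := K_sqr_speed t Ht). assert (Hs1 := K_sqr_speed s Hs).
  assert (HKt := K_pos t). assert (HKs := K_pos s).
  set (p := sqrt (sqrt (dotn n (d1 t) (d1 t)) * sqrt (dotn n (d1 s) (d1 s)))) in *.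
  assert (Hp2 : (p * (K t * K s)) ^ 2 = 1).
  { transitivity ((K t * K t * sqrt (dotn n (d1 t) (d1 t)))
                   * (K s * K s * sqrt (dotn n (d1 s) (d1 s)))).
    - replace ((p * (K t * K s)) ^ 2) with (p * p * (K t * K t) * (K s * K s)) by ring.
      rewrite Hsq. ring.
    - rewrite Ht1, Hs1. ring. }
  assert (0 <= p * (K t * K s)) by (apply Rmult_le_pos; nra).
  nra.
Qed.

Lemma chord_ratio_ge_solution (P u du ddu : R -> R) :
  comparison_solution P a u du ddu ->
  (forall t, a < t < 1 -> S1 n d1 d2 d3 t <= P t) ->
  forall x, a < x < 1 ->
  normn n (subv (phi x) (phi a)) / sqrt (normn n (d1 x) * normn n (d1 a)) >= u x.
Proof.
  intros Hsol HP x Hx.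
  assert (Hy := y_ge_solution P u du ddu 1 ltac:(lra) ltac:(lra) Hsol HP
                  (chord2_pos P u du ddu Hsol HP) x Hx).
  assert (HKa := K_sqr_speed a a_in). assert (HKa0 := K_pos a).
  assert (Hprod := sqrt_speed_mul_K x a ltac:(lra) a_in).
  assert (Hratio : normn n (subv (phi x) (phi a)) / sqrt (normn n (d1 x) * normn n (d1 a))
                   = y x * K a).
  { set (Q := sqrt (normn n (d1 x) * normn n (d1 a))) in *.
    assert (HQ : Q <> 0) by (intro H0; rewrite H0, Rmult_0_l in Hprod; lra).
    unfold Rdiv. replace (/ Q) with (K x * K a)
      by (rewrite <- (Rmult_1_l (/ Q)), <- Hprod; field; exact HQ).
    unfold y. change (normn n (subv (phi x) (phi a))) with (sqrt (chord2 x)). ring. }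
  rewrite Hratio. apply Rle_ge.
  replace (u x) with (K a * sqrt (dotn n (d1 a) (d1 a)) * u x * K a)
    by (transitivity (K a * K a * sqrt (dotn n (d1 a) (d1 a)) * u x); [ring | rewrite HKa; ring]).
  apply Rmult_le_compat_r; lra.
Qed.

End Chord.

Definition chord_ratio n (phi d1 : R -> nat -> R) x1 x2 :=
  normn n (subv (phi x1) (phi x2)) / sqrt (normn n (d1 x1) * normn n (d1 x2)).

Lemma chord_ratio_ge_of_ordered n phi d1 (B : R -> R -> R) :
  (forall x1 x2, B x1 x2 = B x2 x1) -> (forall x, B x x <= 0) ->
  (forall a x, -1 < a -> a < x -> x < 1 -> chord_ratio n phi d1 x a >= B x a) ->
  forall x1 x2, -1 < x1 < 1 -> -1 < x2 < 1 -> chord_ratio n phi d1 x1 x2 >= B x1 x2.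
Proof.
  intros Hsym Hdiag Hord x1 x2 H1 H2. destruct (Rtotal_order x1 x2) as [Hlt|[<-|Hgt]].
  - unfold chord_ratio. rewrite normn_subv_sym, Rmult_comm, Hsym. apply Hord; lra.
  - unfold chord_ratio. rewrite normn_subv_diag. unfold Rdiv. rewrite Rmult_0_l.
    apply Rle_ge, Hdiag.
  - apply Hord; lra.
Qed.

Theorem mainTheorem4 (n : nat) (phi d1 d2 d3 : R -> nat -> R) :
  C3_curve n phi d1 d2 d3 ->
  (forall x, -1 < x < 1 -> normn n (d1 x) <> 0) ->
  ((forall x, -1 < x < 1 -> S1 n d1 d2 d3 x <= PI ^ 2 / 2) ->
   forall x1 x2, -1 < x1 < 1 -> -1 < x2 < 1 ->
     normn n (subv (phi x1) (phi x2))
       / sqrt (normn n (d1 x1) * normn n (d1 x2))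
     >= 2 / PI * sin (PI / 2 * Rabs (x1 - x2)))
  /\
  ((forall x, -1 < x < 1 -> S1 n d1 d2 d3 x <= 2 / (1 - x ^ 2) ^ 2) ->
   forall x1 x2, -1 < x1 < 1 -> -1 < x2 < 1 ->
     normn n (subv (phi x1) (phi x2))
       / sqrt (normn n (d1 x1) * normn n (d1 x2))
     >= sqrt ((1 - x1 ^ 2) * (1 - x2 ^ 2)) * dhyp x1 x2).
Proof.
  intros Hcurve Hnz.
  assert (Hspeed : forall t, -1 < t < 1 -> 0 < dotn n (d1 t) (d1 t)).
  { intros t Ht. destruct (dotn_nonneg n (d1 t)) as [|E]; auto.
    exfalso. apply (Hnz t Ht). unfold normn. now rewrite <- E, sqrt_0. }
  split; intros HS; apply (chord_ratio_ge_of_ordered n phi d1).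
  - intros x1 x2. now rewrite Rabs_minus_sym.
  - intro x. rewrite Rminus_diag, Rabs_R0, Rmult_0_r, sin_0. lra.
  - intros a x Ha Hax Hx. rewrite Rabs_right by lra.
    apply (chord_ratio_ge_solution n phi d1 d2 d3 Hcurve Hspeed a ltac:(lra) _ _ _ _
      (sine_comparison_solution a Ha)); [intros t Ht; apply HS|]; lra.
  - intros x1 x2. unfold dhyp. now rewrite Rabs_minus_sym, (Rmult_comm (1 - x1 ^ 2)).
  - intro x. unfold dhyp. rewrite Rminus_diag, Rabs_R0. lra.
  - intros a x Ha Hax Hx.
    replace (sqrt ((1 - x ^ 2) * (1 - a ^ 2)) * dhyp x a)
      with (sqrt (1 - a ^ 2) * sqrt (1 - x ^ 2) * (artanh x - artanh a)).
    + apply (chord_ratio_ge_solution n phi d1 d2 d3 Hcurve Hspeed a ltac:(lra) _ _ _ _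
        (hyperbolic_comparison_solution a ltac:(lra))); [intros t Ht; apply HS|]; lra.
    + unfold dhyp. fold (artanh x) (artanh a).
      rewrite Rabs_right by (pose proof (artanh_increasing a x Ha Hax Hx); lra).
      rewrite sqrt_mult by nra. ring.
Qed.
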